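(* Let $\Gamma\triangleright W$ be a well-formed CCCP configuration, $c$ a channel and $v$ a closed value, and let $\mathit{eureka},\mathit{fail}$ be channels that do not occur free in $W$ and are idle in $\Gamma$; let $\mathit{arb},\mathit{no}$ be closed values with $\delta_{\mathit{arb}}=\delta_{\mathit{no}}=1$, and let $d$ be a channel distinct from $c,\mathit{eureka},\mathit{fail}$. Define $T_{\gamma(c,v)}=\nu d{:}(0,\cdot).\big(\lfloor ?c(x).(([x=v]\,d!\langle\mathit{arb}\rangle.\mathbf 0,\ \mathbf 0)+\mathit{fail}!\langle\mathit{no}\rangle.\mathbf 0)\rfloor\ \big|\ \sigma^2.([\mathrm{exp}(d)]\,\mathit{eureka}!\langle\mathit{arb}\rangle.\mathbf 0,\ \mathbf 0)\big)$ and $T^{\checkmark}_{\gamma(c,v)}=\nu d{:}(0,\cdot).\big(\sigma.d!\langle\mathit{arb}\rangle.\mathbf 0\ \big|\ \sigma.([\mathrm{exp}(d)]\,\mathit{eureka}!\langle\mathit{arb}\rangle.\mathbf 0,\ \mathbf 0)\big)$, where $\nu d{:}(0,\cdot)$ means $d$ is restricted with exposure time $0$ (idle; the value component is irrelevant). Then $\Gamma\triangleright W\overset{\gamma(c,v)}{\Rightarrow}\Gamma'\triangleright W'$ if and only if $\Gamma\triangleright W|T_{\gamma(c,v)}\to_i^*\to_\sigma\to_i^*\Gamma'\triangleright W'|T^{\checkmark}_{\gamma(c,v)}$.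
   Context: CCCP syntax. Fix a set of channels (ranged over by $c,d$) and a set of values containing data variables $x,y$ and a special error value $\mathtt{err}$; closed values $v,w$ contain no variables, and each closed value $v$ has a transmission time $\delta_v\in\mathbb{N}$ with $\delta_v\ge 1$. Expressions $e$ are built from values; closed expressions evaluate to closed values via $[\![e]\!]$. Station code (processes) is given by $P,Q ::= c!\langle e\rangle.P \mid \lfloor ?c(x).P\rfloor Q \mid \sigma.P \mid \tau.P \mid P+Q \mid [b]P,Q \mid X \mid \mathbf{0} \mid \mathrm{fix}\,X.P$, where $b$ is either $e_1=e_2$ or $\mathrm{exp}(c)$, $[b]P,Q$ is a conditional (then-branch $P$, else-branch $Q$), $\lfloor ?c(x).P\rfloor Q$ is a receiver on $c$ with timeout branch $Q$ ($x$ bound in $P$), $\sigma.P$ is a one-unit delay and $\sigma^n.P$ denotes $n$ nested delays. System terms are $W ::= P \mid \lfloor ?c(x).P\rfloor \mid W_1|W_2 \mid \nu c{:}(n,v).W$, where $\lfloor ?c(x).P\rfloor$ is an active receiver ($x$ bound in $P$) and $\nu c{:}(n,v).W$ restricts $c$ with local channel state $(n,v)$. In $\mathrm{fix}\,X.P$ every occurrence of $X$ in $P$ is guarded, i.e. lies within a broadcast prefix, a receiver continuation, a timeout branch, a $\sigma$-prefix, or a branch of a conditional. Terms are identified up to $\alpha$-conversion. A channel environment is a map $\Gamma$ from channels to $\mathbb{N}\times$(closed values); write $\Gamma\vdash_t c:n$ and $\Gamma\vdash_v c:w$ when $\Gamma(c)=(n,w)$; $c$ is idle in $\Gamma$ if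 $\Gamma\vdash_t c:0$ and exposed otherwise; $\Gamma[c\mapsto(n,v)]$ is $\Gamma$ updated at $c$; $\Gamma\le\Gamma'$ iff for every $c$, $\Gamma\vdash_t c:n$ and $\Gamma'\vdash_t c:m$ imply $n\le m$. A configuration $\Gamma\triangleright W$ is a channel environment together with a closed system term (no free data or process variables). Intensional semantics. Actions $\lambda$ are $c!v$, $c?v$, $\sigma$, $\tau$. The environment update $\lambda(\Gamma)$ is: $\sigma(\Gamma)(c)=(\max(n-1,0),w)$ whenever $\Gamma(c)=(n,w)$; $c!v(\Gamma)$ agrees with $\Gamma$ except at $c$, where it is $(\delta_v,v)$ if $c$ is idle in $\Gamma$ and $(\max(\delta_v,n),\mathtt{err})$ if $\Gamma\vdash_t c:n>0$; $c?v(\Gamma)=c!v(\Gamma)$; $\tau(\Gamma)=\Gamma$. The predicate $\mathrm{rcv}(W,c)$ on terms is: true for $\lfloor ?d(x).P\rfloor Q$ iff $d=c$; $\mathrm{rcv}(P+Q,c)=\mathrm{rcv}(P,c)\vee\mathrm{rcv}(Q,c)$; $\mathrm{rcv}(\mathrm{fix}\,X.P,c)=\mathrm{rcv}(P,c)$; $\mathrm{rcv}(W_1|W_2,c)=\mathrm{rcv}(W_1,c)\vee\mathrm{rcv}(W_2,c)$; $\mathrm{rcv}(\nu d{:}(n,v).W,c)=\mathrm{rcv}(W,c)$ (with $d\neq c$ by $\alpha$-conversion); false for all other forms (broadcasts, $\tau.P$, $\sigma.P$, conditionals, $X$, $\mathbf 0$, active receivers). Then $\mathrm{rcv}(\Gamma\triangleright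 W,c)$ holds iff $c$ is idle in $\Gamma$ and $\mathrm{rcv}(W,c)$. Transitions $\Gamma\triangleright W\xrightarrow{\lambda}W'$ are the least relation closed under: (Snd) $[\![e]\!]=v$ implies $\Gamma\triangleright c!\langle e\rangle.P\xrightarrow{c!v}\sigma^{\delta_v}.P$; (Rcv) $c$ idle in $\Gamma$ implies $\Gamma\triangleright\lfloor ?c(x).P\rfloor Q\xrightarrow{c?v}\lfloor ?c(x).P\rfloor$; (RcvIgn) $\neg\mathrm{rcv}(\Gamma\triangleright W,c)$ implies $\Gamma\triangleright W\xrightarrow{c?v}W$; (Sync) $\Gamma\triangleright W_1\xrightarrow{c!v}W_1'$ and $\Gamma\triangleright W_2\xrightarrow{c?v}W_2'$ imply $\Gamma\triangleright W_1|W_2\xrightarrow{c!v}W_1'|W_2'$, and symmetrically; (RcvPar) $\Gamma\triangleright W_i\xrightarrow{c?v}W_i'$ for $i=1,2$ imply $\Gamma\triangleright W_1|W_2\xrightarrow{c?v}W_1'|W_2'$; (TimeNil) $\Gamma\triangleright\mathbf 0\xrightarrow{\sigma}\mathbf 0$; (Sleep) $\Gamma\triangleright\sigma.P\xrightarrow{\sigma}P$; (ActRcv) $\Gamma\vdash_t c:n$, $n>1$ imply $\Gamma\triangleright\lfloor ?c(x).P\rfloor\xrightarrow{\sigma}\lfloor ?c(x).P\rfloor$; (EndRcv) $\Gamma\vdash_t c:1$, $\Gamma\vdash_v c:w$ imply $\Gamma\triangleright\lfloor ?c(x).P\rfloor\xrightarrow{\sigma}\{w/x\}P$; (Timeout)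 $c$ idle in $\Gamma$ implies $\Gamma\triangleright\lfloor ?c(x).P\rfloor Q\xrightarrow{\sigma}Q$; (RcvLate) $c$ exposed in $\Gamma$ implies $\Gamma\triangleright\lfloor ?c(x).P\rfloor Q\xrightarrow{\tau}\lfloor ?c(x).\{\mathtt{err}/x\}P\rfloor$; (Tau) $\Gamma\triangleright\tau.P\xrightarrow{\tau}P$; (Then)/(Else) $\Gamma\triangleright[b]P,Q\xrightarrow{\tau}\sigma.P$ if $[\![b]\!]_\Gamma$ is true and $\xrightarrow{\tau}\sigma.Q$ otherwise, where $[\![e_1=e_2]\!]_\Gamma$ is true iff $[\![e_1]\!]=[\![e_2]\!]$ and $[\![\mathrm{exp}(c)]\!]_\Gamma$ is true iff $c$ is exposed in $\Gamma$; (TimePar) $\Gamma\triangleright W_i\xrightarrow{\sigma}W_i'$ for $i=1,2$ imply $\Gamma\triangleright W_1|W_2\xrightarrow{\sigma}W_1'|W_2'$; (TauPar) $\Gamma\triangleright W_1\xrightarrow{\tau}W_1'$ implies $\Gamma\triangleright W_1|W_2\xrightarrow{\tau}W_1'|W_2$, and symmetrically; (Rec) $\Gamma\triangleright\{\mathrm{fix}\,X.P/X\}P\xrightarrow{\lambda}W$ implies $\Gamma\triangleright\mathrm{fix}\,X.P\xrightarrow{\lambda}W$; (Sum) for $\lambda\in\{\tau,c!v\}$, $\Gamma\triangleright P\xrightarrow{\lambda}W$ implies $\Gamma\triangleright P+Q\xrightarrow{\lambda}W$, and symmetrically; (SumTime) $\Gamma\triangleright P\xrightarrow{\sigma}P'$,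 $\Gamma\triangleright Q\xrightarrow{\sigma}Q'$ imply $\Gamma\triangleright P+Q\xrightarrow{\sigma}P'+Q'$; (SumRcv) $\Gamma\triangleright P\xrightarrow{c?v}W$ and $\mathrm{rcv}(\Gamma\triangleright P,c)$ imply $\Gamma\triangleright P+Q\xrightarrow{c?v}W$, and symmetrically; (ResI) $\Gamma[c\mapsto(n,v)]\triangleright W\xrightarrow{c!w}W'$ implies $\Gamma\triangleright\nu c{:}(n,v).W\xrightarrow{\tau}\nu c{:}(c!w(\Gamma[c\mapsto(n,v)]))(c).W'$; (ResV) $\Gamma[c\mapsto(n,v)]\triangleright W\xrightarrow{\lambda}W'$ with $c$ not occurring in $\lambda$ implies $\Gamma\triangleright\nu c{:}(n,v).W\xrightarrow{\lambda}\nu c{:}(\lambda(\Gamma[c\mapsto(n,v)]))(c).W'$. Reductions. $\Gamma\triangleright W\to\Gamma'\triangleright W'$ iff $\Gamma\triangleright W\xrightarrow{\lambda}W'$ for some $\lambda\in\{c!v,\sigma,\tau\}$ and $\Gamma'=\lambda(\Gamma)$; it is instantaneous ($\to_i$) if $\lambda\neq\sigma$ and timed ($\to_\sigma$) if $\lambda=\sigma$. Extensional semantics. Extensional actions $\alpha\in\{c?v,\sigma,\tau,\gamma(c,v),\iota(c)\}$ between configurations are given by: (Input) $\Gamma\triangleright W\xrightarrow{c?v}W'$ implies $\Gamma\triangleright W\overset{c?v}{\rightarrowtail}c?v(\Gamma)\triangleright W'$; (Time) $\Gamma\triangleright W\xrightarrow{\sigma}W'$ implies $\Gamma\triangleright W\overset{\sigma}{\rightarrowtail}\sigma(\Gamma)\triangleright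 W'$; (Shh) $\Gamma\triangleright W\xrightarrow{c!v}W'$ implies $\Gamma\triangleright W\overset{\tau}{\rightarrowtail}c!v(\Gamma)\triangleright W'$; (TauExt) $\Gamma\triangleright W\xrightarrow{\tau}W'$ implies $\Gamma\triangleright W\overset{\tau}{\rightarrowtail}\Gamma\triangleright W'$; (Deliver) $\Gamma(c)=(1,v)$ and $\Gamma\triangleright W\xrightarrow{\sigma}W'$ imply $\Gamma\triangleright W\overset{\gamma(c,v)}{\rightarrowtail}\sigma(\Gamma)\triangleright W'$; (Idle) $c$ idle in $\Gamma$ implies $\Gamma\triangleright W\overset{\iota(c)}{\rightarrowtail}\Gamma\triangleright W$. Weak actions: $\Rightarrow$ is the reflexive-transitive closure of $\overset{\tau}{\rightarrowtail}$; $\overset{\alpha}{\Rightarrow}$ is $\Rightarrow\overset{\alpha}{\rightarrowtail}\Rightarrow$. Well-formedness. The set of well-formed configurations is the least set such that: $\Gamma\triangleright P$ is well-formed for every closed process $P$; $\Gamma\triangleright\lfloor ?c(x).P\rfloor$ is well-formed whenever $c$ is exposed in $\Gamma$; $\Gamma\triangleright W_1|W_2$ is well-formed whenever $\Gamma\triangleright W_1$ and $\Gamma\triangleright W_2$ are; $\Gamma\triangleright\nu c{:}(n,v).W$ is well-formed whenever $\Gamma[c\mapsto(n,v)]\triangleright W$ is. *)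

(* Channels are de Bruijn indices (nat): inside [SRes n w W] the restricted
   channel is index 0 and an outer channel k is index k.+1.  This realises
   "terms identified up to alpha-conversion" for channel restriction.
   Data variables and process variables are names (nat); substitution only
   ever substitutes closed values / closed terms, so no capture can occur. *)
From mathcomp Require Import all_boot.
Set Implicit Arguments.
Unset Strict Implicit.
Unset Printing Implicit Defensive.

Inductive star (A : Type) (R : A -> A -> Prop) : A -> A -> Prop :=
| star_refl x : star R x x
| star_step x y z : R x y -> star R y z -> star R x z.

Section CCCP.
(* closed values, the error value, and transmission times *)
Variable V : Type.
Variable err : V.
Variable delta : V -> nat.

Inductive expr :=
| EVal (w : V)
| EVar (x : nat)
| EApp (f : V -> V -> V) (e1 e2 : expr).

Inductive bexp :=
| BEq (e1 e2 : expr)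
| BExp (c : nat).

Inductive proc :=
| PSnd (c : nat) (e : expr) (P : proc)
| PRcv (c : nat) (x : nat) (P Q : proc)
| PSigma (P : proc)
| PTau (P : proc)
| PSum (P Q : proc)
| PIf (b : bexp) (P Q : proc)
| PVar (X : nat)
| PNil
| PFix (X : nat) (P : proc).

Inductive sys :=
| SProc (P : proc)
| SActRcv (c : nat) (x : nat) (P : proc)
| SPar (W1 W2 : sys)
| SRes (n : nat) (w : V) (W : sys).

Inductive act :=
| AOut (c : nat) (w : V)
| AIn (c : nat) (w : V)
| ASig
| ATau.

Definition env := nat -> (nat * V)%type.

Definition scons (s : nat * V) (G : env) : env :=
  fun k => match k with 0 => s | k'.+1 => G k' end.

Fixpoint sigman (n : nat) (P : proc) : proc :=
  match n with 0 => P | n'.+1 => PSigma (sigman n' P) end.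

Fixpoint eval (e : expr) : option V :=
  match e with
  | EVal w => Some w
  | EVar _ => None
  | EApp f e1 e2 =>
      match eval e1, eval e2 with
      | Some a, Some b => Some (f a b)
      | _, _ => None
      end
  end.

Fixpoint esubst (x : nat) (w : V) (e : expr) : expr :=
  match e with
  | EVal u => EVal u
  | EVar y => if y == x then EVal w else EVar y
  | EApp f e1 e2 => EApp f (esubst x w e1) (esubst x w e2)
  end.

Definition bsubst (x : nat) (w : V) (b : bexp) : bexp :=
  match b with
  | BEq e1 e2 => BEq (esubst x w e1) (esubst x w e2)
  | BExp c => BExp c
  end.

Fixpoint dsubst (x : nat) (w : V) (P : proc) : proc :=
  match P with
  | PSnd c e P1 => PSnd c (esubst x w e) (dsubst x w P1)
  | PRcv c y P1 Q1 =>
      PRcv c y (if y == x then P1 else dsubst x w P1) (dsubst x w Q1)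
  | PSigma P1 => PSigma (dsubst x w P1)
  | PTau P1 => PTau (dsubst x w P1)
  | PSum P1 Q1 => PSum (dsubst x w P1) (dsubst x w Q1)
  | PIf b P1 Q1 => PIf (bsubst x w b) (dsubst x w P1) (dsubst x w Q1)
  | PVar X => PVar X
  | PNil => PNil
  | PFix X P1 => PFix X (dsubst x w P1)
  end.

Fixpoint psubst (X : nat) (R : proc) (P : proc) : proc :=
  match P with
  | PSnd c e P1 => PSnd c e (psubst X R P1)
  | PRcv c y P1 Q1 => PRcv c y (psubst X R P1) (psubst X R Q1)
  | PSigma P1 => PSigma (psubst X R P1)
  | PTau P1 => PTau (psubst X R P1)
  | PSum P1 Q1 => PSum (psubst X R P1) (psubst X R Q1)
  | PIf b P1 Q1 => PIf b (psubst X R P1) (psubst X R Q1)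
  | PVar Y => if Y == X then R else PVar Y
  | PNil => PNil
  | PFix Y P1 => if Y == X then PFix Y P1 else PFix Y (psubst X R P1)
  end.

Fixpoint rcvp (P : proc) (c : nat) : bool :=
  match P with
  | PRcv d _ _ _ => d == c
  | PSum P1 Q1 => rcvp P1 c || rcvp Q1 c
  | PFix _ P1 => rcvp P1 c
  | _ => false
  end.

Fixpoint rcvs (W : sys) (c : nat) : bool :=
  match W with
  | SProc P => rcvp P c
  | SActRcv _ _ _ => false
  | SPar W1 W2 => rcvs W1 c || rcvs W2 c
  | SRes _ _ W1 => rcvs W1 c.+1
  end.

Definition idle (G : env) (c : nat) : Prop := (G c).1 = 0.
Definition exposed (G : env) (c : nat) : Prop := 0 < (G c).1.

Definition rcv_cfg (G : env) (W : sys) (c : nat) : Prop :=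
  idle G c /\ rcvs W c = true.

Definition upd_out (c : nat) (w : V) (G : env) : env :=
  fun k => if k == c then
             (if (G c).1 == 0 then (delta w, w)
              else (maxn (delta w) (G c).1, err))
           else G k.

Definition upd (l : act) (G : env) : env :=
  match l with
  | ASig => fun k => ((G k).1.-1, (G k).2)
  | AOut c w => upd_out c w G
  | AIn c w => upd_out c w G
  | ATau => G
  end.

(* actions of the restricted body: outer channel k is k.+1 inside *)
Definition lift_act (l : act) : act :=
  match l with
  | AOut c w => AOut c.+1 w
  | AIn c w => AIn c.+1 w
  | ASig => ASig
  | ATau => ATau
  end.

Definition beval (G : env) (b : bexp) : Prop :=
  match b with
  | BEq e1 e2 => exists w, eval e1 = Some w /\ eval e2 = Some w
  | BExp c => exposed G c
  end.

Definition out_or_tau (l : act) : Prop :=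
  match l with AOut _ _ | ATau => True | _ => False end.

Inductive step : env -> sys -> act -> sys -> Prop :=
| st_snd G c e P v :
    eval e = Some v ->
    step G (SProc (PSnd c e P)) (AOut c v) (SProc (sigman (delta v) P))
| st_rcv G c x P Q v :
    idle G c ->
    step G (SProc (PRcv c x P Q)) (AIn c v) (SActRcv c x P)
| st_rcvign G W c v :
    ~ rcv_cfg G W c ->
    step G W (AIn c v) W
| st_sync_l G W1 W2 W1' W2' c v :
    step G W1 (AOut c v) W1' -> step G W2 (AIn c v) W2' ->
    step G (SPar W1 W2) (AOut c v) (SPar W1' W2')
| st_sync_r G W1 W2 W1' W2' c v :
    step G W1 (AIn c v) W1' -> step G W2 (AOut c v) W2' ->
    step G (SPar W1 W2) (AOut c v) (SPar W1' W2')
| st_rcvpar G W1 W2 W1' W2' c v :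
    step G W1 (AIn c v) W1' -> step G W2 (AIn c v) W2' ->
    step G (SPar W1 W2) (AIn c v) (SPar W1' W2')
| st_timenil G :
    step G (SProc PNil) ASig (SProc PNil)
| st_sleep G P :
    step G (SProc (PSigma P)) ASig (SProc P)
| st_actrcv G c x P :
    1 < (G c).1 ->
    step G (SActRcv c x P) ASig (SActRcv c x P)
| st_endrcv G c x P w :
    G c = (1, w) ->
    step G (SActRcv c x P) ASig (SProc (dsubst x w P))
| st_timeout G c x P Q :
    idle G c ->
    step G (SProc (PRcv c x P Q)) ASig (SProc Q)
| st_rcvlate G c x P Q :
    exposed G c ->
    step G (SProc (PRcv c x P Q)) ATau (SActRcv c x (dsubst x err P))
| st_tau G P :
    step G (SProc (PTau P)) ATau (SProc P)
| st_then G b P Q :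
    beval G b ->
    step G (SProc (PIf b P Q)) ATau (SProc (PSigma P))
| st_else G b P Q :
    ~ beval G b ->
    step G (SProc (PIf b P Q)) ATau (SProc (PSigma Q))
| st_timepar G W1 W2 W1' W2' :
    step G W1 ASig W1' -> step G W2 ASig W2' ->
    step G (SPar W1 W2) ASig (SPar W1' W2')
| st_taupar_l G W1 W2 W1' :
    step G W1 ATau W1' ->
    step G (SPar W1 W2) ATau (SPar W1' W2)
| st_taupar_r G W1 W2 W2' :
    step G W2 ATau W2' ->
    step G (SPar W1 W2) ATau (SPar W1 W2')
| st_rec G X P l W :
    step G (SProc (psubst X (PFix X P) P)) l W ->
    step G (SProc (PFix X P)) l W
| st_sum_l G P Q l W :
    out_or_tau l -> step G (SProc P) l W ->
    step G (SProc (PSum P Q)) l W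
| st_sum_r G P Q l W :
    out_or_tau l -> step G (SProc Q) l W ->
    step G (SProc (PSum P Q)) l W
| st_sumtime G P Q P' Q' :
    step G (SProc P) ASig (SProc P') -> step G (SProc Q) ASig (SProc Q') ->
    step G (SProc (PSum P Q)) ASig (SProc (PSum P' Q'))
| st_sumrcv_l G P Q c v W :
    step G (SProc P) (AIn c v) W -> rcv_cfg G (SProc P) c ->
    step G (SProc (PSum P Q)) (AIn c v) W
| st_sumrcv_r G P Q c v W :
    step G (SProc Q) (AIn c v) W -> rcv_cfg G (SProc Q) c ->
    step G (SProc (PSum P Q)) (AIn c v) W
| st_resi G n w W W' u :
    step (scons (n, w) G) W (AOut 0 u) W' ->
    step G (SRes n w W) ATau
      (SRes (upd (AOut 0 u) (scons (n, w) G) 0).1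
            (upd (AOut 0 u) (scons (n, w) G) 0).2 W')
| st_resv G n w W W' l :
    step (scons (n, w) G) W (lift_act l) W' ->
    step G (SRes n w W) l
      (SRes (upd (lift_act l) (scons (n, w) G) 0).1
            (upd (lift_act l) (scons (n, w) G) 0).2 W').

Definition conf := (env * sys)%type.

Definition red_i (C C' : conf) : Prop :=
  exists l, out_or_tau l /\ step C.1 C.2 l C'.2 /\ C'.1 = upd l C.1.
Definition red_s (C C' : conf) : Prop :=
  step C.1 C.2 ASig C'.2 /\ C'.1 = upd ASig C.1.

Definition red_i_s_i (C C' : conf) : Prop :=
  exists C1 C2, star red_i C C1 /\ red_s C1 C2 /\ star red_i C2 C'.

Inductive eact :=
| EIn (c : nat) (v : V)
| ESig
| ETau
| EGamma (c : nat) (v : V)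
| EIota (c : nat).

Inductive ext_step : conf -> eact -> conf -> Prop :=
| ex_input G W W' c v :
    step G W (AIn c v) W' -> ext_step (G, W) (EIn c v) (upd (AIn c v) G, W')
| ex_time G W W' :
    step G W ASig W' -> ext_step (G, W) ESig (upd ASig G, W')
| ex_shh G W W' c v :
    step G W (AOut c v) W' -> ext_step (G, W) ETau (upd (AOut c v) G, W')
| ex_tau G W W' :
    step G W ATau W' -> ext_step (G, W) ETau (G, W')
| ex_deliver G W W' c v :
    G c = (1, v) -> step G W ASig W' ->
    ext_step (G, W) (EGamma c v) (upd ASig G, W')
| ex_idle G W c :
    idle G c -> ext_step (G, W) (EIota c) (G, W).

Definition tau_star : conf -> conf -> Prop :=
  star (fun C C' => ext_step C ETau C').

Definition weak_step (C : conf) (a : eact) (C' : conf) : Prop :=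
  exists C1 C2, tau_star C C1 /\ ext_step C1 a C2 /\ tau_star C2 C'.

Fixpoint eclosed (bnd : seq nat) (e : expr) : bool :=
  match e with
  | EVal _ => true
  | EVar x => x \in bnd
  | EApp _ e1 e2 => eclosed bnd e1 && eclosed bnd e2
  end.

Definition bclosed (bnd : seq nat) (b : bexp) : bool :=
  match b with
  | BEq e1 e2 => eclosed bnd e1 && eclosed bnd e2
  | BExp _ => true
  end.

Fixpoint dclosed (bnd : seq nat) (P : proc) : bool :=
  match P with
  | PSnd _ e P1 => eclosed bnd e && dclosed bnd P1
  | PRcv _ x P1 Q1 => dclosed (x :: bnd) P1 && dclosed bnd Q1
  | PSigma P1 | PTau P1 => dclosed bnd P1
  | PSum P1 Q1 => dclosed bnd P1 && dclosed bnd Q1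
  | PIf b P1 Q1 => [&& bclosed bnd b, dclosed bnd P1 & dclosed bnd Q1]
  | PVar _ | PNil => true
  | PFix _ P1 => dclosed bnd P1
  end.

Fixpoint pclosed (bnd : seq nat) (P : proc) : bool :=
  match P with
  | PSnd _ _ P1 | PSigma P1 | PTau P1 => pclosed bnd P1
  | PRcv _ _ P1 Q1 | PSum P1 Q1 | PIf _ P1 Q1 => pclosed bnd P1 && pclosed bnd Q1
  | PVar X => X \in bnd
  | PNil => true
  | PFix X P1 => pclosed (X :: bnd) P1
  end.

Definition closed_proc (P : proc) : bool := dclosed [::] P && pclosed [::] P.

Fixpoint closed_sys (W : sys) : bool :=
  match W with
  | SProc P => closed_proc P
  | SActRcv _ x P => dclosed [:: x] P && pclosed [::] P
  | SPar W1 W2 => closed_sys W1 && closed_sys W2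
  | SRes _ _ W1 => closed_sys W1
  end.

Fixpoint unguarded (X : nat) (P : proc) : bool :=
  match P with
  | PVar Y => Y == X
  | PSum P1 Q1 => unguarded X P1 || unguarded X Q1
  | PTau P1 => unguarded X P1
  | PFix Y P1 => if Y == X then false else unguarded X P1
  | _ => false
  end.

Fixpoint guarded_proc (P : proc) : bool :=
  match P with
  | PSnd _ _ P1 | PSigma P1 | PTau P1 => guarded_proc P1
  | PRcv _ _ P1 Q1 | PSum P1 Q1 | PIf _ P1 Q1 => guarded_proc P1 && guarded_proc Q1
  | PVar _ | PNil => true
  | PFix X P1 => ~~ unguarded X P1 && guarded_proc P1
  end.

Fixpoint guarded_sys (W : sys) : bool :=
  match W with
  | SProc P | SActRcv _ _ P => guarded_proc P
  | SPar W1 W2 => guarded_sys W1 && guarded_sys W2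
  | SRes _ _ W1 => guarded_sys W1
  end.

Definition bocc (c : nat) (b : bexp) : bool :=
  match b with BExp d => d == c | _ => false end.

Fixpoint pocc (c : nat) (P : proc) : bool :=
  match P with
  | PSnd d _ P1 => (d == c) || pocc c P1
  | PRcv d _ P1 Q1 => [|| d == c, pocc c P1 | pocc c Q1]
  | PSigma P1 | PTau P1 | PFix _ P1 => pocc c P1
  | PSum P1 Q1 => pocc c P1 || pocc c Q1
  | PIf b P1 Q1 => [|| bocc c b, pocc c P1 | pocc c Q1]
  | PVar _ | PNil => false
  end.

Fixpoint chan_occ (c : nat) (W : sys) : bool :=
  match W with
  | SProc P => pocc c P
  | SActRcv d _ P => (d == c) || pocc c P
  | SPar W1 W2 => chan_occ c W1 || chan_occ c W2
  | SRes _ _ W1 => chan_occ c.+1 W1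
  end.

Inductive wf : env -> sys -> Prop :=
| wf_proc G P : closed_proc P -> wf G (SProc P)
| wf_actrcv G c x P : exposed G c -> wf G (SActRcv c x P)
| wf_par G W1 W2 : wf G W1 -> wf G W2 -> wf G (SPar W1 W2)
| wf_res G n w W : wf (scons (n, w) G) W -> wf G (SRes n w W).

(* Inside the restriction the bound channel d is index 0
   and the free channels c, eureka, fail are shifted to c.+1 etc.
   The received data variable x is named 0 (it is bound).  [dv] is the
   irrelevant value component of d's initial state (0, dv). *)
Definition T_gamma (c : nat) (v arb no dv : V) (eureka fail : nat) : sys :=
  SRes 0 dv
    (SPar
       (SActRcv c.+1 0
          (PSum (PIf (BEq (EVar 0) (EVal v)) (PSnd 0 (EVal arb) PNil) PNil)
                (PSnd fail.+1 (EVal no) PNil)))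
       (SProc (sigman 2 (PIf (BExp 0) (PSnd eureka.+1 (EVal arb) PNil) PNil)))).

Definition T_check (arb dv : V) (eureka : nat) : sys :=
  SRes 0 dv
    (SPar
       (SProc (PSigma (PSnd 0 (EVal arb) PNil)))
       (SProc (PSigma (PIf (BExp 0) (PSnd eureka.+1 (EVal arb) PNil) PNil)))).

End CCCP.

From Pilot Require Import Defs.
From mathcomp Require Import all_boot.
Set Implicit Arguments.
Unset Strict Implicit.
Unset Printing Implicit Defensive.

(* Until its one time step the tester only ignores inputs (it is "inert"): its
   receiver on c is already active and its other components are asleep.  Hence,
   along ->_i^*, W | T evolves exactly as W does by tau-steps.  At the time step
   the tester either stays inert (c was not about to deliver) or, when c delivers
   w, becomes T_delivered w.  From there the only instantaneous move reaching the
   shape of T^check is the then-branch of [x = v], which forces w = v; the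
   else-branch and the broadcast on fail lead to inert terms that are not
   T^check. *)

Section Transfer.
Variables (V : Type) (err : V) (delta : V -> nat).
Local Notation step := (step err delta).
Local Notation red_i := (red_i err delta).
Local Notation tau_star := (tau_star err delta).

Definition inert (X : sys V) : Prop :=
  forall G l X', step G X l X' -> l <> ASig V ->
  (exists c w, l = AIn c w) /\ X' = X.

Lemma inert_nil : inert (SProc (PNil V)).
Proof. by move=> G l X' H Hl; inversion H; subst; split; eauto. Qed.

Lemma inert_sigma P : inert (SProc (PSigma P)).
Proof. by move=> G l X' H Hl; inversion H; subst; split; eauto. Qed.

Lemma inert_sigman_nil n : inert (SProc (sigman n (PNil V))).
Proof. by case: n => [|n]; [apply: inert_nil|apply: inert_sigma]. Qed.

Lemma inert_actrcv c x P : inert (SActRcv c x P).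
Proof. by move=> G l X' H Hl; inversion H; subst; split; eauto. Qed.

Ltac use_inert :=
  repeat match goal with
  | I : inert ?Y, Hs : Defs.step _ _ _ ?Y _ _ |- _ =>
      have [[? [? ?]] ?] := I _ _ _ Hs ltac:(done); clear Hs; subst
  end.

Lemma inert_par X1 X2 : inert X1 -> inert X2 -> inert (SPar X1 X2).
Proof.
move=> in1 in2 G l X' H Hl; inversion H; subst => //; use_inert => //.
all: by split; eauto.
Qed.

Lemma inert_res n w X : inert X -> inert (SRes n w X).
Proof.
move=> inX G l X' H Hl; inversion H; subst => //; first by split; eauto.
- by use_inert.
- match goal with Hs : Defs.step _ _ (scons _ _) X _ _ |- _ => move: Hs end.
  case: l Hl {H} => //= [c u|c u|] _ Hs; use_inert => //.
  by split; eauto.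
Qed.

Lemma step_sigma_par_inv G W X Z : step G (SPar W X) (ASig V) Z ->
  exists W' X', [/\ Z = SPar W' X', step G W (ASig V) W' & step G X (ASig V) X'].
Proof. by move=> Hs; inversion Hs; subst; exists W1', W2'. Qed.

Lemma red_i_par_cases G W X C : red_i (G, SPar W X) C ->
  [\/ exists c w W' X', [/\ C = (upd err delta (AOut c w) G, SPar W' X'),
                            step G W (AOut c w) W' & step G X (AIn c w) X'],
      exists c w W' X', [/\ C = (upd err delta (AOut c w) G, SPar W' X'),
                            step G W (AIn c w) W' & step G X (AOut c w) X'],
      exists W', C = (G, SPar W' X) /\ step G W (ATau V) W'
    | exists X', C = (G, SPar W X') /\ step G X (ATau V) X'].
Proof.
case: C => G' Z [l [Ho [Hs /= ->]]]; case: l Ho Hs => // [c w|] _ /= Hs;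
  inversion Hs; subst.
- by apply: Or41; exists c, w, W1', W2'.
- by apply: Or42; exists c, w, W1', W2'.
- by apply: Or43; exists W1'.
- by apply: Or44; exists W2'.
Qed.

Lemma red_i_par_inert G W X C : inert X -> red_i (G, SPar W X) C ->
  exists G' W', C = (G', SPar W' X) /\ ext_step err delta (G, W) (ETau V) (G', W').
Proof.
move=> inX /red_i_par_cases[[c [w [W' [X' [-> Hw Hx]]]]]|
  [c [w [W' [X' [_ _ Hx]]]]]|[W' [-> Hw]]|[X' [_ Hx]]]; use_inert => //.
- by exists (upd err delta (AOut c w) G), W'; split; [|apply: ex_shh Hw].
- by exists G, W'; split; [|apply: ex_tau].
Qed.

Lemma star_red_i_par_inert G W X C : inert X -> star red_i (G, SPar W X) C ->
  exists G' W', C = (G', SPar W' X) /\ tau_star (G, W) (G', W').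
Proof.
move=> inX; move E: (G, SPar W X) => C0 Hs.
elim: Hs G W E => [C1|C1 C2 C3 H12 _ IH] G W E; subst.
  by exists G, W; split; [|apply: star_refl].
have [G1 [W1 [E1 H]]] := red_i_par_inert inX H12; subst C2.
have [G2 [W2 [-> Ht]]] := IH G1 W1 erefl.
by exists G2, W2; split; [|apply: star_step H Ht].
Qed.

Lemma star_red_i_par_inert_to G W X G' W' Y : inert X ->
  star red_i (G, SPar W X) (G', SPar W' Y) -> Y = X /\ tau_star (G, W) (G', W').
Proof. by move=> inX /(star_red_i_par_inert inX) [? [? [[-> -> ->]]]]. Qed.

Lemma tau_star_par_red_i T C C' : (forall c, rcvs T c = false) ->
  tau_star C C' -> star red_i (C.1, SPar C.2 T) (C'.1, SPar C'.2 T).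
Proof.
move=> noRcv; elim=> [C0|C0 C1 C2 H01 _ IH]; first exact: star_refl.
apply: star_step IH; inversion H01; subst.
- exists (AOut c v); split=> //; split=> //=.
  apply: st_sync_l; first eassumption.
  by apply: st_rcvign => -[_]; rewrite noRcv.
- by exists (ATau V); split=> //; split=> //=; apply: st_taupar_l.
Qed.
End Transfer.

Section Test.
Variables (V : Type) (err : V) (delta : V -> nat).
Variables (c : nat) (v arb no dv : V) (eureka fail : nat).
Local Notation step := (step err delta).
Local Notation red_i := (red_i err delta).
Local Notation tau_star := (tau_star err delta).
Local Notation T_gamma := (T_gamma c v arb no dv eureka fail).
Local Notation T_check := (T_check arb dv eureka).

Definition T_body : proc V :=
  PSum (PIf (BEq (EVar V 0) (EVal v)) (PSnd 0 (EVal arb) (PNil V)) (PNil V))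
       (PSnd fail.+1 (EVal no) (PNil V)).

Definition T_probe : proc V :=
  PIf (BExp V 0) (PSnd eureka.+1 (EVal arb) (PNil V)) (PNil V).

Definition T_waiting : sys V :=
  SRes 0 dv (SPar (SActRcv c.+1 0 T_body) (SProc (PSigma T_probe))).

Definition T_delivered (w : V) : sys V :=
  SRes 0 dv (SPar (SProc (dsubst 0 w T_body)) (SProc (PSigma T_probe))).

Ltac invert_steps :=
  repeat match goal with
  | Hs : Defs.step _ _ _ (SProc _) _ _ |- _ => inversion Hs; clear Hs; subst
  | Hs : Defs.step _ _ _ (SActRcv _ _ _) _ _ |- _ => inversion Hs; clear Hs; subst
  | Hs : Defs.step _ _ _ (SPar _ _) _ _ |- _ => inversion Hs; clear Hs; subst
  end.

Lemma T_gammaE :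
  T_gamma = SRes 0 dv (SPar (SActRcv c.+1 0 T_body) (SProc (PSigma (PSigma T_probe)))).
Proof. by []. Qed.

Lemma T_checkE :
  T_check = SRes 0 dv (SPar (SProc (PSigma (PSnd 0 (EVal arb) (PNil V))))
                            (SProc (PSigma T_probe))).
Proof. by []. Qed.

Lemma inert_T_gamma : inert err delta T_gamma.
Proof.
by rewrite T_gammaE; apply/inert_res/inert_par; [apply: inert_actrcv|apply: inert_sigma].
Qed.

Lemma inert_T_waiting : inert err delta T_waiting.
Proof. by apply/inert_res/inert_par; [apply: inert_actrcv|apply: inert_sigma]. Qed.

Lemma inert_T_check : inert err delta T_check.
Proof. by rewrite T_checkE; apply/inert_res/inert_par; apply: inert_sigma. Qed.

Lemma T_gamma_sigma G X : step G T_gamma (ASig V) X ->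
  X = T_waiting \/ exists2 w, G c = (1, w) & X = T_delivered w.
Proof.
rewrite T_gammaE => Hs; inversion Hs; subst; simpl in *; invert_steps.
- by left.
- by right; exists w.
Qed.

Lemma T_gamma_deliver G w : G c = (1, w) -> step G T_gamma (ASig V) (T_delivered w).
Proof.
move=> Gc; rewrite T_gammaE.
by apply: (@st_resv _ _ _ _ _ _ _ _ (ASig V)); apply: st_timepar; constructor.
Qed.

Lemma T_delivered_accept G : step G (T_delivered v) (ATau V) T_check.
Proof.
apply: (@st_resv _ _ _ _ _ _ _ _ (ATau V)).
by apply/st_taupar_l/st_sum_l => //; apply: st_then; exists v.
Qed.

Lemma T_delivered_input G w c' u X :
  step G (T_delivered w) (AIn c' u) X -> X = T_delivered w.
Proof.
move=> Hs; inversion Hs; subst => //; simpl in *; invert_steps => //.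
Qed.

Lemma T_delivered_instant G w l X :
  step G (T_delivered w) l X -> out_or_tau l ->
  (l = ATau V /\ w = v /\ X = T_check) \/ (inert err delta X /\ X <> T_check).
Proof.
move=> Hs; case: l Hs => // [c' u|] Hs _; inversion Hs; subst; simpl in *; invert_steps => //.
- right; split; first by apply/inert_res/inert_par; [apply: inert_sigman_nil|apply: inert_sigma].
  by rewrite T_checkE; case: (delta u) => [|[|k]].
- match goal with Hb : beval _ _ |- _ => case: Hb => u [[<-] [->]] end.
  by left.
- right; split; first by apply/inert_res/inert_par; apply: inert_sigma.
  by rewrite T_checkE.
Qed.

Lemma star_red_i_T_delivered G W w G' W' :
  star red_i (G, SPar W (T_delivered w)) (G', SPar W' T_check) ->
  w = v /\ tau_star (G, W) (G', W').
Proof.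
move E: (G, SPar W (T_delivered w)) => C; move E': (G', SPar W' T_check) => C' Hs.
elim: Hs G W E E' => [C0|C0 C1 C2 H01 H12 IH] G W E E'; subst.
  by case: E'.
case: (red_i_par_cases H01) =>
  [[c' [u [W1 [X1 [E1 Hw /T_delivered_input EX]]]]]|
   [c' [u [W1 [X1 [E1 _ /T_delivered_instant/(_ I) HX]]]]]|
   [W1 [E1 Hw]]|[X1 [E1 /T_delivered_instant/(_ I) HX]]]; subst.
- by have [-> Ht] := IH _ _ erefl erefl; split; [|apply: star_step Ht; apply: ex_shh Hw].
- case: HX => [[]|[inX1 neX1]] //.
  by case: (star_red_i_par_inert_to inX1 H12) => /esym.
- by have [-> Ht] := IH _ _ erefl erefl; split; [|apply: star_step Ht; apply: ex_tau].
- case: HX => [[_ [-> EX]]|[inX1 neX1]].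
    by rewrite EX in H12; case: (star_red_i_par_inert_to inert_T_check H12).
  by case: (star_red_i_par_inert_to inX1 H12) => /esym.
Qed.

Lemma weak_deliver_iff_red_test G W G' W' :
  weak_step err delta (G, W) (EGamma c v) (G', W') <->
  red_i_s_i err delta (G, SPar W T_gamma) (G', SPar W' T_check).
Proof.
split.
- case=> [[G1 W1] [[G2 W2] [H1 [Hd H3]]]]; inversion Hd; subst.
  exists (G1, SPar W1 T_gamma), (upd err delta (ASig V) G1, SPar W2 (T_delivered v)).
  split; first exact: (tau_star_par_red_i (T := T_gamma) (fun _ => erefl) H1).
  split; first by split=> //=; apply: st_timepar; [|exact: T_gamma_deliver].
  apply: star_step (tau_star_par_red_i (T := T_check) (fun _ => erefl) H3).
  by exists (ATau V); split=> //; split=> //=; apply/st_taupar_r/T_delivered_accept.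
- case=> C1 [[G2 X2] [H1 [[Hs2 E2] H3]]].
  have [G1 [W1 [E1 Ht1]]] := star_red_i_par_inert inert_T_gamma H1; subst C1.
  have EG2 : G2 = upd err delta (ASig V) G1 := E2; subst G2.
  have [W2 [T2 [EX2 Hw /T_gamma_sigma HT]]] := step_sigma_par_inv Hs2.
  rewrite /= in EX2; subst X2.
  case: HT => [ET2|[w Gc ET2]]; subst T2.
  + by case: (star_red_i_par_inert_to inert_T_waiting H3).
  + have [Ew Ht3] := star_red_i_T_delivered H3; subst w.
    exists (G1, W1), (upd err delta (ASig V) G1, W2); split=> //; split=> //.
    exact: ex_deliver.
Qed.
End Test.

Theorem mainTheorem19 (V : Type) (err : V) (delta : V -> nat)
  (delta_pos : forall w : V, 1 <= delta w)
  (G : env V) (W : sys V) (c : nat) (v : V)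
  (eureka fail : nat) (arb no dv : V) :
  closed_sys W -> guarded_sys W -> wf G W ->
  ~~ chan_occ eureka W -> ~~ chan_occ fail W ->
  idle G eureka -> idle G fail ->
  delta arb = 1 -> delta no = 1 ->
  forall (G' : env V) (W' : sys V),
    weak_step err delta (G, W) (EGamma c v) (G', W') <->
    red_i_s_i err delta (G, SPar W (T_gamma c v arb no dv eureka fail))
                        (G', SPar W' (T_check arb dv eureka)).
Proof.
by move=> *; apply: weak_deliver_iff_red_test.
Qed.
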